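(* For every context $\Gamma$, terms $M,N,A,B$ and variable $x$: if $\Gamma,x:A\vdash M:B$ and $\Gamma\vdash N:A$, then $\Gamma\vdash M[x:=N]:B[x:=N]$.
   Context: Let $\mathcal V$ (the variables) be a type with decidable equality, equipped with functions $\mathrm{encode}:\mathcal V\to\mathbb N$ and $\mathrm{decode}:\mathbb N\to\mathcal V$ such that $\mathrm{encode}(\mathrm{decode}\,n)=n$ for all $n$. Let $\mathcal C$ (the constants) be any type. Terms $\Lambda$ are generated by: $c\,k$ ($k\in\mathcal C$), $v\,x$ ($x\in\mathcal V$), $\lambda[x:A]M$, $\Pi[x:A]B$ and $M\cdot N$; in $\lambda[x:A]M$ and $\Pi[x:A]B$ the name $x$ binds in $M$ (resp. $B$) but not in $A$. Terms are raw first-order syntax (not identified up to renaming of bound variables) and $\equiv$ denotes syntactic identity. The list of free variables is $\mathrm{fv}(c\,k)=[\,]$, $\mathrm{fv}(v\,x)=[x]$, $\mathrm{fv}(\lambda[x:A]M)=\mathrm{fv}\,A\mathbin{+\!\!+}(\mathrm{fv}\,M-x)$, $\mathrm{fv}(\Pi[x:A]B)=\mathrm{fv}\,A\mathbin{+\!\!+}(\mathrm{fv}\,B-x)$, $\mathrm{fv}(M\cdot N)=\mathrm{fv}\,M\mathbin{+\!\!+}\mathrm{fv}\,N$, where $\mathbin{+\!\!+}$ is list concatenation and $xs-x$ deletes every occurrence of $x$ from $xs$. Fix a function $\chi':\mathrm{List}\,\mathbb N\to\mathbb N$ with $\chi'(ns)\notin ns$ for every list $ns$, and put $X'(xs)=\mathrm{decode}(\chi'(\mathrm{map}\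 \mathrm{encode}\ xs))$. A substitution is any function $\sigma:\mathcal V\to\Lambda$; $\iota=v$ is the identity substitution; $(\sigma,x:=N)(y)=N$ if $y=x$ and $\sigma\,y$ otherwise. For a substitution $\sigma$ and a list $xs$ of variables, $X(\sigma,xs)=X'(\text{concatenation of the lists }\mathrm{fv}(\sigma\,y)\text{ for }y\in xs)$. The action $M\bullet\sigma$ is defined by structural recursion: $c\,k\bullet\sigma=c\,k$; $v\,x\bullet\sigma=\sigma\,x$; $(M\cdot N)\bullet\sigma=(M\bullet\sigma)\cdot(N\bullet\sigma)$; $(\lambda[x:A]M)\bullet\sigma=\lambda[y:A\bullet\sigma](M\bullet(\sigma,x:=v\,y))$ with $y=X(\sigma,\mathrm{fv}\,M-x)$; $(\Pi[x:A]B)\bullet\sigma=\Pi[y:A\bullet\sigma](B\bullet(\sigma,x:=v\,y))$ with $y=X(\sigma,\mathrm{fv}\,B-x)$. Unary substitution is $M[x:=N]=M\bullet(\iota,x:=N)$. $\alpha$-conversion $\sim_\alpha$ is the inductively defined relation with rules: $c\,k\sim_\alpha c\,k$; $v\,x\sim_\alpha v\,x$; $M\cdot N\sim_\alpha M'\cdot N'$ if $M\sim_\alpha M'$ and $N\sim_\alpha N'$; $\lambda[x:A]M\sim_\alpha\lambda[x':A']M'$ if $A\sim_\alpha A'$ and there is a variable $y$ with $y\notin\mathrm{fv}\,M-x$, $y\notin\mathrm{fv}\,M'-x'$ and $M[x:=v\,y]\equiv M'[x':=v\,y]$; and the same rule with $\Pi$ in place of $\lambda$. $\beta$-contraction is $(\lambda[x:A]M)\cdot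 N\ \triangleright_\beta\ M[x:=N]$. One-step $\beta$-reduction $\to_\beta$ is its contextual closure, inductively: $M\to_\beta N$ if $M\triangleright_\beta N$; $\lambda[x:A]M\to_\beta\lambda[x:A]M'$ and $\Pi[x:A]M\to_\beta\Pi[x:A]M'$ if $M\to_\beta M'$; $\lambda[x:A]M\to_\beta\lambda[x:A']M$ and $\Pi[x:A]M\to_\beta\Pi[x:A']M$ if $A\to_\beta A'$; $M\cdot P\to_\beta N\cdot P$ and $P\cdot M\to_\beta P\cdot N$ if $M\to_\beta N$. $\beta$-conversion $\simeq_\beta$ is the equivalence (reflexive–symmetric–transitive) closure of $\sim_\alpha\cup\to_\beta$. Pure Type System: fix a binary relation $\mathcal A\subseteq\mathcal C\times\mathcal C$ (axioms) and a ternary relation $\mathcal R\subseteq\mathcal C\times\mathcal C\times\mathcal C$ (rules). A context is a finite list of pairs $(x,A)$ with $x\in\mathcal V$, $A\in\Lambda$; $\Gamma,x:A$ denotes the list $(x,A)::\Gamma$; $\mathrm{dom}\,\Gamma$ is the list of first components; $(x,A)\in\Gamma$ is list membership. The judgments $\Gamma\ \mathrm{ok}$ and $\Gamma\vdash M:A$ are defined mutually inductively by: (nil) $[\,]\ \mathrm{ok}$; (cons) if $\Gamma\ \mathrm{ok}$, $\Gamma\vdash A:c\,s$ and $x\notin\mathrm{dom}\,\Gamma$ then $\Gamma,x:A\ \mathrm{ok}$; (sort) if $\Gamma\ \mathrm{ok}$ and $\mathcal A\,s_1\,s_2$ then $\Gamma\vdash c\,s_1:c\,s_2$; (var) if $\Gamma\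 \mathrm{ok}$ and $(x,A)\in\Gamma$ then $\Gamma\vdash v\,x:A$; (prod) if $\mathcal R\,s_1\,s_2\,s_3$, $\Gamma\vdash A:c\,s_1$ and for every $y\notin\mathrm{dom}\,\Gamma$, $\Gamma,y:A\vdash B[x:=v\,y]:c\,s_2$, then $\Gamma\vdash\Pi[x:A]B:c\,s_3$; (abs) if $\mathcal R\,s_1\,s_2\,s_3$, $\Gamma\vdash A:c\,s_1$, for every $z\notin\mathrm{dom}\,\Gamma$, $\Gamma,z:A\vdash B[y:=v\,z]:c\,s_2$, and for every $z\notin\mathrm{dom}\,\Gamma$, $\Gamma,z:A\vdash M[x:=v\,z]:B[y:=v\,z]$, then $\Gamma\vdash\lambda[x:A]M:\Pi[y:A]B$; (app) if $\Gamma\vdash M:\Pi[x:A]B$, $\Gamma\vdash N:A$ and $\Gamma\vdash B[x:=N]:c\,s$ for some $s$, then $\Gamma\vdash M\cdot N:B[x:=N]$; (conv) if $\Gamma\vdash M:A$, $A\simeq_\beta B$ and $\Gamma\vdash B:c\,s$ for some $s$, then $\Gamma\vdash M:B$. (The premises quantified over all fresh names in (prod) and (abs) are infinitely branching.) *)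

From Stdlib Require Import List Relations.
Import ListNotations.
Set Implicit Arguments.

Record VarType := {
  vcar :> Type;
  veq_dec : forall x y : vcar, {x = y} + {x <> y};
  encode : vcar -> nat;
  decode : nat -> vcar;
  encode_decode : forall n, encode (decode n) = n
}.

Section PTS.
Context (V : VarType) (C : Type).

Inductive term : Type :=
| tc : C -> term
| tv : V -> term
| tlam : V -> term -> term -> term
| tpi : V -> term -> term -> term
| tapp : term -> term -> term.

Definition lminus (xs : list V) (x : V) : list V := remove (veq_dec V) x xs.

Fixpoint fv (M : term) : list V :=
  match M with
  | tc _ => []
  | tv x => [x]
  | tlam x A M => fv A ++ lminus (fv M) x
  | tpi x A B => fv A ++ lminus (fv B) x
  | tapp M N => fv M ++ fv N
  end.

Definition subst := V -> term.
Definition iota : subst := tv.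
Definition upd (s : subst) (x : V) (N : term) : subst :=
  fun y => if veq_dec V y x then N else s y.

Section Action.
Context (chi' : list nat -> nat).

Definition X' (xs : list V) : V := decode V (chi' (map (encode V) xs)).
Definition Xs (s : subst) (xs : list V) : V := X' (flat_map (fun y => fv (s y)) xs).

Fixpoint act (s : subst) (M : term) {struct M} : term :=
  match M with
  | tc k => tc k
  | tv x => s x
  | tapp M N => tapp (act s M) (act s N)
  | tlam x A M =>
      let y := Xs s (lminus (fv M) x) in
      tlam y (act s A) (act (upd s x (tv y)) M)
  | tpi x A B =>
      let y := Xs s (lminus (fv B) x) in
      tpi y (act s A) (act (upd s x (tv y)) B)
  end.

Definition usubst (M : term) (x : V) (N : term) : term := act (upd iota x N) M.

Inductive alpha : term -> term -> Prop :=
| alpha_c : forall k, alpha (tc k) (tc k)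
| alpha_v : forall x, alpha (tv x) (tv x)
| alpha_app : forall M N M' N', alpha M M' -> alpha N N' ->
    alpha (tapp M N) (tapp M' N')
| alpha_lam : forall x A M x' A' M' y, alpha A A' ->
    ~ In y (lminus (fv M) x) -> ~ In y (lminus (fv M') x') ->
    usubst M x (tv y) = usubst M' x' (tv y) ->
    alpha (tlam x A M) (tlam x' A' M')
| alpha_pi : forall x A M x' A' M' y, alpha A A' ->
    ~ In y (lminus (fv M) x) -> ~ In y (lminus (fv M') x') ->
    usubst M x (tv y) = usubst M' x' (tv y) ->
    alpha (tpi x A M) (tpi x' A' M').

Inductive beta_contr : term -> term -> Prop :=
| beta_contr_intro : forall x A M N,
    beta_contr (tapp (tlam x A M) N) (usubst M x N).

Inductive beta : term -> term -> Prop :=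
| beta_top : forall M N, beta_contr M N -> beta M N
| beta_lam_body : forall x A M M', beta M M' -> beta (tlam x A M) (tlam x A M')
| beta_pi_body : forall x A M M', beta M M' -> beta (tpi x A M) (tpi x A M')
| beta_lam_dom : forall x A A' M, beta A A' -> beta (tlam x A M) (tlam x A' M)
| beta_pi_dom : forall x A A' M, beta A A' -> beta (tpi x A M) (tpi x A' M)
| beta_appl : forall M N P, beta M N -> beta (tapp M P) (tapp N P)
| beta_appr : forall M N P, beta M N -> beta (tapp P M) (tapp P N).

Definition beta_conv : term -> term -> Prop :=
  clos_refl_sym_trans term (union term alpha beta).

Definition context := list (V * term).
Definition dom (G : context) : list V := map fst G.

Section Typing.
Context (Ax : C -> C -> Prop) (Rl : C -> C -> C -> Prop).

Inductive wf : context -> Prop :=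
| wf_nil : wf []
| wf_cons : forall G x A s, wf G -> typ G A (tc s) -> ~ In x (dom G) ->
    wf ((x, A) :: G)
with typ : context -> term -> term -> Prop :=
| typ_sort : forall G s1 s2, wf G -> Ax s1 s2 -> typ G (tc s1) (tc s2)
| typ_var : forall G x A, wf G -> In (x, A) G -> typ G (tv x) A
| typ_prod : forall G x A B s1 s2 s3, Rl s1 s2 s3 -> typ G A (tc s1) ->
    (forall y, ~ In y (dom G) -> typ ((y, A) :: G) (usubst B x (tv y)) (tc s2)) ->
    typ G (tpi x A B) (tc s3)
| typ_abs : forall G x y A B M s1 s2 s3, Rl s1 s2 s3 -> typ G A (tc s1) ->
    (forall z, ~ In z (dom G) -> typ ((z, A) :: G) (usubst B y (tv z)) (tc s2)) ->
    (forall z, ~ In z (dom G) ->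
       typ ((z, A) :: G) (usubst M x (tv z)) (usubst B y (tv z))) ->
    typ G (tlam x A M) (tpi y A B)
| typ_app : forall G M N x A B s, typ G M (tpi x A B) -> typ G N A ->
    typ G (usubst B x N) (tc s) -> typ G (tapp M N) (usubst B x N)
| typ_conv : forall G M A B s, typ G M A -> beta_conv A B -> typ G B (tc s) ->
    typ G M B.

End Typing.
End Action.
End PTS.

From Stdlib Require Import List Relations.
Import ListNotations.

(** The action of a substitution renames each binder to the name [chi'] picks outside
    the free variables of the substituted body.  With this choice composition computes,
    [act t (act s M) = act (scomp s t) M], and [alpha]-equivalence coincides with having
    the same [iota]-normal form; hence substitution preserves [alpha], [beta] and
    conversion.  The theorem is then an instance of a general substitution property,
    proved by induction on typing: if [s] sends every [(y, A)] of [G] to a term typed in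
    [D] by [act s A], then [G |- M : B] gives [D |- act s M : act s B], all up to
    [alpha].  The substitution [x := N], identity elsewhere, is such a map from
    [(x, A) :: G] to [G]. *)

Section Substitution.
Variable V : VarType.
Variable C : Type.
Variable chi' : list nat -> nat.
Hypothesis chi'_notin : forall ns : list nat, ~ In (chi' ns) ns.

Local Notation term := (term V C).
Local Notation tv := (tv V C).
Local Notation io := (iota V C).
Local Notation act := (act chi').
Local Notation usubst := (usubst chi').
Local Notation Xs := (Xs chi').
Local Notation lminus := (lminus V).

Lemma X'_notin (l : list V) : ~ In (X' V chi' l) l.
Proof.
  intros Hin. apply (chi'_notin (map (encode V) l)).
  rewrite <- (encode_decode V (chi' _)). exact (in_map _ _ _ Hin).
Qed.

Lemma flat_map_ext_in {A B} (f g : A -> list B) (l : list A) :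
  (forall a, In a l -> f a = g a) -> flat_map f l = flat_map g l.
Proof. induction l; intros H; simpl; [|f_equal]; auto with datatypes. Qed.

Lemma flat_map_singleton {A} (l : list A) : flat_map (fun a => [a]) l = l.
Proof. induction l; simpl; congruence. Qed.

Lemma flat_map_flat_map {A B D} (f : B -> list D) (g : A -> list B) (l : list A) :
  flat_map f (flat_map g l) = flat_map (fun a => flat_map f (g a)) l.
Proof. induction l; simpl; [|rewrite flat_map_app]; congruence. Qed.

Lemma lminus_app (l1 l2 : list V) x : lminus (l1 ++ l2) x = lminus l1 x ++ lminus l2 x.
Proof. apply remove_app. Qed.

Lemma in_lminus (l : list V) x w : In w (lminus l x) <-> In w l /\ w <> x.
Proof. split; [apply in_remove | intros []; apply in_in_remove; auto]. Qed.

Lemma upd_eq (s : subst V C) x N : upd s x N x = N.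
Proof. unfold upd. destruct (veq_dec V x x); congruence. Qed.

Lemma upd_neq (s : subst V C) x N y : y <> x -> upd s x N y = s y.
Proof. unfold upd. destruct (veq_dec V y x); congruence. Qed.

Definition fresh_for (y : V) (s : subst V C) (l : list V) :=
  forall w, In w l -> ~ In y (fv (s w)).

Lemma Xs_fresh_for (s : subst V C) l : fresh_for (Xs s l) s l.
Proof.
  intros w Hw Hy. apply (X'_notin (flat_map (fun y => fv (s y)) l)).
  apply in_flat_map. eauto.
Qed.

Lemma fresh_for_iota y l : ~ In y l -> fresh_for y io l.
Proof. intros Hy w Hw [->|[]]. auto. Qed.

Lemma Xs_ext (s t : subst V C) l :
  (forall w, In w l -> s w = t w) -> Xs s l = Xs t l.
Proof. intros H. unfold Xs. f_equal. apply flat_map_ext_in. intros w Hw. rewrite H; auto. Qed.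

Lemma Xs_iota l : Xs io l = X' V chi' l.
Proof. unfold Xs. simpl. rewrite flat_map_singleton. reflexivity. Qed.

Lemma lminus_cons_eq (l : list V) x : lminus (x :: l) x = lminus l x.
Proof. unfold lminus. simpl. destruct (veq_dec V x x); congruence. Qed.

Lemma lminus_cons_neq (l : list V) x a : a <> x -> lminus (a :: l) x = a :: lminus l x.
Proof. intros Hax. unfold lminus. simpl. destruct (veq_dec V x a); congruence. Qed.

Lemma lminus_notin (l : list V) x : ~ In x l -> lminus l x = l.
Proof. apply notin_remove. Qed.

Lemma lminus_flat_map_upd (l : list V) (s : subst V C) x y :
  fresh_for y s (lminus l x) ->
  lminus (flat_map (fun w => fv (upd s x (tv y) w)) l) y
  = flat_map (fun w => fv (s w)) (lminus l x).
Proof.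
  induction l as [|a l IH]; intros Hy; [reflexivity|].
  cbn [flat_map]. rewrite lminus_app.
  destruct (veq_dec V a x) as [->|Hax].
  - rewrite upd_eq, lminus_cons_eq in *. change (fv (tv y)) with [y].
    rewrite lminus_cons_eq. exact (IH Hy).
  - rewrite upd_neq, lminus_cons_neq in * by exact Hax. cbn [flat_map].
    rewrite lminus_notin by (apply Hy; left; reflexivity).
    f_equal. apply IH. intros w Hw. apply Hy. right. exact Hw.
Qed.

Lemma fv_act (M : term) : forall s, fv (act s M) = flat_map (fun w => fv (s w)) (fv M).
Proof.
  induction M as [k|y|x A IHA M IHM|x A IHA M IHM|M IHM N IHN]; intros s; simpl.
  3-4: rewrite flat_map_app, IHA, IHM, lminus_flat_map_upd by apply Xs_fresh_for;
       reflexivity.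
  - reflexivity.
  - rewrite app_nil_r. reflexivity.
  - rewrite flat_map_app, IHM, IHN. reflexivity.
Qed.

Lemma lminus_fv_act_upd (M : term) s x y :
  fresh_for y s (lminus (fv M) x) ->
  lminus (fv (act (upd s x (tv y)) M)) y = flat_map (fun w => fv (s w)) (lminus (fv M) x).
Proof. intros Hy. rewrite fv_act. apply lminus_flat_map_upd, Hy. Qed.

Lemma act_ext (M : term) : forall s t,
  (forall w, In w (fv M) -> s w = t w) -> act s M = act t M.
Proof.
  induction M as [k|y|x A IHA M IHM|x A IHA M IHM|M IHM N IHN]; intros s t Hst; simpl in *.
  3-4: rewrite (Xs_ext s t) by (intros; apply Hst, in_or_app; auto);
       f_equal; [apply IHA; auto with datatypes|apply IHM];
       intros w Hw; unfold upd; destruct (veq_dec V w x); [reflexivity|];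
       apply Hst, in_or_app; right; apply in_lminus; auto.
  - reflexivity.
  - auto.
  - f_equal; [apply IHM|apply IHN]; auto with datatypes.
Qed.

Definition scomp (s t : subst V C) : subst V C := fun w => act t (s w).

Lemma scomp_upd (s t : subst V C) x y P w :
  (w <> x -> ~ In y (fv (s w))) ->
  scomp (upd s x (tv y)) (upd t y P) w = upd (scomp s t) x P w.
Proof.
  intros Hy. unfold scomp. destruct (veq_dec V w x) as [->|Hwx].
  - rewrite !upd_eq. simpl. apply upd_eq.
  - rewrite !upd_neq by auto. apply act_ext. intros u Hu. apply upd_neq.
    intros ->. exact (Hy Hwx Hu).
Qed.

Lemma Xs_act_upd (M : term) s t x y :
  fresh_for y s (lminus (fv M) x) ->
  Xs t (lminus (fv (act (upd s x (tv y)) M)) y) = Xs (scomp s t) (lminus (fv M) x).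
Proof.
  intros Hy. unfold Xs. rewrite lminus_fv_act_upd, flat_map_flat_map by exact Hy.
  f_equal. apply flat_map_ext. intros w. unfold scomp. rewrite fv_act. reflexivity.
Qed.

Lemma act_comp (M : term) : forall s t, act t (act s M) = act (scomp s t) M.
Proof.
  induction M as [k|y|x A IHA M IHM|x A IHA M IHM|M IHM N IHN]; intros s t; simpl.
  3-4: rewrite Xs_act_upd by apply Xs_fresh_for; f_equal; [apply IHA|];
       rewrite IHM; apply act_ext; intros w Hw; apply scomp_upd;
       intros Hwx; apply Xs_fresh_for, in_lminus; auto.
  - reflexivity.
  - reflexivity.
  - f_equal; auto.
Qed.

Lemma act_upd_fresh (M : term) s t x y P :
  fresh_for y s (lminus (fv M) x) ->
  act (upd t y P) (act (upd s x (tv y)) M) = act (upd (scomp s t) x P) M.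
Proof.
  intros Hy. rewrite act_comp. apply act_ext. intros w Hw. apply scomp_upd.
  intros Hwx. apply Hy, in_lminus. auto.
Qed.

Lemma act_act_iota (M : term) s : act s (act io M) = act s M.
Proof. rewrite act_comp. reflexivity. Qed.

Definition aeq (M N : term) := act io M = act io N.

Lemma aeq_sym (M N : term) : aeq M N -> aeq N M.
Proof. apply eq_sym. Qed.

Lemma aeq_trans (M N P : term) : aeq M N -> aeq N P -> aeq M P.
Proof. apply eq_trans. Qed.

Lemma aeq_act_iota (M : term) : aeq (act io M) M.
Proof. apply act_act_iota. Qed.

Lemma aeq_act (M N : term) s : aeq M N -> act s M = act s N.
Proof. intros H. rewrite <- (act_act_iota M), <- (act_act_iota N), H. reflexivity. Qed.

Lemma fv_act_iota (M : term) : fv (act io M) = fv M.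
Proof. rewrite fv_act. apply flat_map_singleton. Qed.

Lemma aeq_fv (M N : term) : aeq M N -> fv M = fv N.
Proof. intros H. rewrite <- (fv_act_iota M), <- (fv_act_iota N), H. reflexivity. Qed.

Lemma lminus_fv_usubst (M : term) x y :
  ~ In y (lminus (fv M) x) -> lminus (fv (usubst M x (tv y))) y = lminus (fv M) x.
Proof.
  intros Hy. unfold usubst. rewrite lminus_fv_act_upd by now apply fresh_for_iota.
  apply flat_map_singleton.
Qed.

Lemma act_usubst_rename (M : term) x y s P :
  ~ In y (lminus (fv M) x) -> act (upd s y P) (usubst M x (tv y)) = act (upd s x P) M.
Proof.
  intros Hy. unfold usubst. rewrite act_upd_fresh by now apply fresh_for_iota.
  reflexivity.
Qed.

Lemma alpha_act : forall M N : term, alpha chi' M N -> forall s, act s M = act s N.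
Proof.
  induction 1 as [k|y|M N M' N' _ IHM _ IHN
                 |x A M x' A' M' y _ IHA HyM HyM' E|x A M x' A' M' y _ IHA HyM HyM' E];
    intros s; simpl.
  4-5: assert (El : lminus (fv M) x = lminus (fv M') x')
         by (rewrite <- (lminus_fv_usubst M x y), <- (lminus_fv_usubst M' x' y), E by auto;
             reflexivity);
       rewrite El, IHA, <- (act_usubst_rename M x y), <- (act_usubst_rename M' x' y), E
         by (rewrite ?El; auto);
       reflexivity.
  - reflexivity.
  - reflexivity.
  - rewrite IHM, IHN. reflexivity.
Qed.

Lemma aeq_alpha (M : term) : forall N, aeq M N -> alpha chi' M N.
Proof.
  unfold aeq.
  induction M as [k|y|x A IHA M IHM|x A IHA M IHM|M IHM N IHN];
    intros [k'|y'|x' A' M'|x' A' M'|M' N'] H; simpl in H; try discriminate.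
  3-4: injection H as Ey EA EM;
       assert (Hy : ~ In (Xs io (lminus (fv M) x)) (lminus (fv M) x))
         by (rewrite Xs_iota; apply X'_notin);
       econstructor; [apply IHA, EA| exact Hy | rewrite Ey, Xs_iota; apply X'_notin
                     | unfold usubst; rewrite Ey at 2; exact EM].
  - injection H as ->. constructor.
  - injection H as ->. constructor.
  - injection H as EM EN. constructor; auto.
Qed.

Lemma alpha_iff_aeq (M N : term) : alpha chi' M N <-> aeq M N.
Proof. split; [intros H; apply alpha_act, H | apply aeq_alpha]. Qed.

Local Notation conv := (beta_conv chi').

Lemma aeq_conv (M N : term) : aeq M N -> conv M N.
Proof. intros H. apply rst_step. left. apply alpha_iff_aeq, H. Qed.

Lemma conv_cong (f : term -> term) :
  (forall M N, aeq M N -> aeq (f M) (f N)) ->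
  (forall M N, beta chi' M N -> beta chi' (f M) (f N)) ->
  forall M N, conv M N -> conv (f M) (f N).
Proof.
  intros Ha Hb M N H. induction H as [M N [H|H]| |M N _ IH|M N P _ IH1 _ IH2].
  - apply aeq_conv, Ha, alpha_iff_aeq, H.
  - apply rst_step. right. auto.
  - apply rst_refl.
  - apply rst_sym, IH.
  - eapply rst_trans; eauto.
Qed.

Lemma aeq_tlam x (A A' M M' : term) : aeq A A' -> aeq M M' -> aeq (tlam x A M) (tlam x A' M').
Proof.
  unfold aeq. intros HA HM. simpl. rewrite (aeq_fv M M'), HA, (aeq_act M M') by exact HM.
  reflexivity.
Qed.

Lemma aeq_tpi x (A A' M M' : term) : aeq A A' -> aeq M M' -> aeq (tpi x A M) (tpi x A' M').
Proof.
  unfold aeq. intros HA HM. simpl. rewrite (aeq_fv M M'), HA, (aeq_act M M') by exact HM.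
  reflexivity.
Qed.

Lemma aeq_tapp (M M' N N' : term) : aeq M M' -> aeq N N' -> aeq (tapp M N) (tapp M' N').
Proof. unfold aeq. intros HM HN. simpl. rewrite HM, HN. reflexivity. Qed.

Lemma fv_beta : forall M N : term, beta chi' M N -> incl (fv N) (fv M).
Proof.
  induction 1 as [_ _ [x A M N]| | | | | |]; simpl; intros u Hu;
    rewrite ?in_app_iff, ?in_lminus in *; [|intuition ..].
  unfold usubst in Hu. rewrite fv_act, in_flat_map in Hu. destruct Hu as [w [Hw Hu]].
  destruct (veq_dec V w x) as [->|Hwx].
  - rewrite upd_eq in Hu. auto.
  - rewrite upd_neq in Hu by exact Hwx. destruct Hu as [->|[]]. auto.
Qed.

Lemma act_iota_binder (M : term) x s y :
  fresh_for y s (lminus (fv M) x) ->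
  Xs io (lminus (fv (act (upd s x (tv y)) M)) y)
    = X' V chi' (flat_map (fun w => fv (s w)) (lminus (fv M) x))
  /\ forall P, act (upd io y P) (act (upd s x (tv y)) M) = act (upd (scomp s io) x P) M.
Proof.
  intros Hy. rewrite Xs_iota, lminus_fv_act_upd by exact Hy.
  split; [reflexivity|]. intros P. apply act_upd_fresh, Hy.
Qed.

Lemma aeq_usubst_act (M N N' : term) s x y :
  fresh_for y s (lminus (fv M) x) -> aeq N' (act s N) ->
  aeq (usubst (act (upd s x (tv y)) M) y N') (act s (usubst M x N)).
Proof.
  intros Hy HN. unfold aeq, usubst.
  rewrite act_upd_fresh by exact Hy. rewrite !act_comp. apply act_ext. intros w Hw.
  unfold scomp. destruct (veq_dec V w x) as [->|Hwx].
  - rewrite !upd_eq. rewrite HN, act_comp. reflexivity.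
  - rewrite !upd_neq by exact Hwx. simpl. rewrite act_act_iota. reflexivity.
Qed.

Lemma fresh_for_incl y s (l l' : list V) : incl l' l -> fresh_for y s l -> fresh_for y s l'.
Proof. intros Hl Hy w Hw. apply Hy, Hl, Hw. Qed.

Lemma aeq_tlam_rename (M B : term) x s y y' :
  fresh_for y s (lminus (fv M) x) -> fresh_for y' s (lminus (fv M) x) ->
  aeq (tlam y B (act (upd s x (tv y)) M)) (tlam y' B (act (upd s x (tv y')) M)).
Proof.
  intros Hy Hy'. unfold aeq. simpl.
  destruct (act_iota_binder M x s y Hy) as [-> ->], (act_iota_binder M x s y' Hy') as [-> ->].
  reflexivity.
Qed.

Lemma aeq_tpi_rename (M B : term) x s y y' :
  fresh_for y s (lminus (fv M) x) -> fresh_for y' s (lminus (fv M) x) ->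
  aeq (tpi y B (act (upd s x (tv y)) M)) (tpi y' B (act (upd s x (tv y')) M)).
Proof.
  intros Hy Hy'. unfold aeq. simpl.
  destruct (act_iota_binder M x s y Hy) as [-> ->], (act_iota_binder M x s y' Hy') as [-> ->].
  reflexivity.
Qed.

Lemma beta_act : forall M N : term, beta chi' M N -> forall s, conv (act s M) (act s N).
Proof.
  induction 1 as [_ _ [x A M N]|x A M M' HM IH|x A M M' HM IH|x A A' M _ IH|x A A' M _ IH
                 |M N P _ IH|M N P _ IH]; intros s; simpl.
  2-3: assert (Hy : fresh_for (Xs s (lminus (fv M) x)) s (lminus (fv M') x))
         by (eapply fresh_for_incl; [apply remove_incl, fv_beta, HM | apply Xs_fresh_for]).
  - eapply rst_trans.
    + apply rst_step. right. apply beta_top, beta_contr_intro.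
    + apply aeq_conv, aeq_usubst_act; [apply Xs_fresh_for|reflexivity].
  - eapply rst_trans.
    + apply (conv_cong (tlam _ _)); [intros; apply aeq_tlam; [reflexivity|auto]
                                    | intros; apply beta_lam_body; auto | apply IH].
    + apply aeq_conv, aeq_tlam_rename; [exact Hy | apply Xs_fresh_for].
  - eapply rst_trans.
    + apply (conv_cong (tpi _ _)); [intros; apply aeq_tpi; [reflexivity|auto]
                                   | intros; apply beta_pi_body; auto | apply IH].
    + apply aeq_conv, aeq_tpi_rename; [exact Hy | apply Xs_fresh_for].
  - apply (conv_cong (fun P => tlam _ P _)); [intros; apply aeq_tlam; [auto|reflexivity]
                                            | intros; apply beta_lam_dom; auto | apply IH].
  - apply (conv_cong (fun P => tpi _ P _)); [intros; apply aeq_tpi; [auto|reflexivity]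
                                           | intros; apply beta_pi_dom; auto | apply IH].
  - apply (conv_cong (fun P => tapp P _)); [intros; apply aeq_tapp; [auto|reflexivity]
                                          | intros; apply beta_appl; auto | apply IH].
  - apply (conv_cong (tapp _)); [intros; apply aeq_tapp; [reflexivity|auto]
                               | intros; apply beta_appr; auto | apply IH].
Qed.

Lemma conv_act : forall M N : term, conv M N -> forall s, conv (act s M) (act s N).
Proof.
  induction 1 as [M N [H|H]| |M N _ IH|M N P _ IH1 _ IH2]; intros s.
  - rewrite (alpha_act _ _ H s). apply rst_refl.
  - apply beta_act, H.
  - apply rst_refl.
  - apply rst_sym, IH.
  - eapply rst_trans; [apply IH1|apply IH2].
Qed.

Lemma aeq_tc_inv (M : term) k : aeq M (tc V k) -> M = tc V k.
Proof. unfold aeq, iota. destruct M; simpl; intros H; try discriminate H; congruence. Qed.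

Lemma aeq_tv_inv (M : term) y : aeq M (tv y) -> M = tv y.
Proof. unfold aeq, iota. destruct M; simpl; intros H; try discriminate H; congruence. Qed.

Lemma act_binder_inv x' (B' B : term) x s :
  (forall w, act io (s w) = s w) ->
  Xs io (lminus (fv B') x') = Xs s (lminus (fv B) x) ->
  act (upd io x' (tv (Xs io (lminus (fv B') x')))) B'
    = act (upd s x (tv (Xs s (lminus (fv B) x)))) B ->
  forall P, act (upd io x' P) B' = act (upd s x P) B.
Proof.
  intros Hs Ez EB P. set (z := Xs s (lminus (fv B) x)) in *. rewrite Ez in EB.
  transitivity (act (upd io z P) (act (upd io x' (tv z)) B')).
  - rewrite act_upd_fresh by (rewrite <- Ez; apply Xs_fresh_for). reflexivity.
  - rewrite EB, act_upd_fresh by apply Xs_fresh_for.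
    apply act_ext. intros w _. unfold upd, scomp. destruct (veq_dec V w x); auto.
Qed.

Definition body_aeq x' (B' : term) (s : subst V C) x (B : term) :=
  forall P, act (upd io x' P) B' = act (upd (scomp s io) x P) B.

Lemma aeq_act_tpi_inv (M : term) s x A B : aeq M (act s (tpi x A B)) ->
  exists x' A' B', M = tpi x' A' B' /\ aeq A' (act s A) /\ body_aeq x' B' s x B.
Proof.
  unfold aeq. rewrite act_comp. destruct M as [| |x' A' B'|x' A' B'|]; simpl; intros H;
    try discriminate H.
  injection H as Ez EA EB. exists x', A', B'. split; [reflexivity|split].
  - rewrite EA, act_comp. reflexivity.
  - intros P. apply act_binder_inv; auto. intros w. apply act_act_iota.
Qed.

Lemma aeq_act_tlam_inv (M : term) s x A B : aeq M (act s (tlam x A B)) ->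
  exists x' A' B', M = tlam x' A' B' /\ aeq A' (act s A) /\ body_aeq x' B' s x B.
Proof.
  unfold aeq. rewrite act_comp. destruct M as [| |x' A' B'|x' A' B'|]; simpl; intros H;
    try discriminate H.
  injection H as Ez EA EB. exists x', A', B'. split; [reflexivity|split].
  - rewrite EA, act_comp. reflexivity.
  - intros P. apply act_binder_inv; auto. intros w. apply act_act_iota.
Qed.

Lemma aeq_act_tapp_inv (M : term) s P Q : aeq M (act s (tapp P Q)) ->
  exists P' Q', M = tapp P' Q' /\ aeq P' (act s P) /\ aeq Q' (act s Q).
Proof.
  unfold aeq. destruct M as [| | | |P' Q']; simpl; intros H; try discriminate H.
  injection H as EP EQ. exists P', Q'. auto.
Qed.

Lemma act_upd_notin (B N : term) s x : ~ In x (fv B) -> act (upd s x N) B = act s B.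
Proof. intros Hx. apply act_ext. intros w Hw. apply upd_neq. intros ->. exact (Hx Hw). Qed.

Lemma in_fv_usubst (M N : term) x u : In u (fv M) -> u <> x -> In u (fv (usubst M x N)).
Proof.
  intros Hu Hux. unfold usubst. rewrite fv_act. apply in_flat_map.
  exists u. rewrite upd_neq by exact Hux. simpl. auto.
Qed.

Lemma incl_lminus_fv_body (M : term) x (D : list V) :
  (forall z, ~ In z D -> incl (fv (usubst M x (tv z))) (z :: D)) ->
  incl (lminus (fv M) x) D.
Proof.
  intros H u Hu. apply in_lminus in Hu as [Hu Hux].
  pose proof (X'_notin (u :: D)) as Hz. set (z := X' V chi' (u :: D)) in Hz.
  destruct (H z (fun Hin => Hz (or_intror Hin)) u (in_fv_usubst M _ x u Hu Hux)) as [Ezu|HuD].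
  - exfalso. apply Hz. left. symmetry. exact Ezu.
  - exact HuD.
Qed.

Section Typing.
Variable Ax : C -> C -> Prop.
Variable Rl : C -> C -> C -> Prop.

Local Notation typ := (typ chi' Ax Rl).
Local Notation wf := (wf chi' Ax Rl).

Lemma typ_wf : forall G (M B : term), typ G M B -> wf G.
Proof. induction 1; auto. Qed.

Lemma in_dom (G : context V C) y A : In (y, A) G -> In y (dom G).
Proof. intros H. exact (in_map fst _ _ H). Qed.

Lemma fv_typ : forall G (M B : term), typ G M B -> incl (fv M) (dom G).
Proof.
  induction 1 as [G s1 s2|G x A _ Hin|G x A B s1 s2 s3 _ _ IHA _ IHB
                 |G x y A B M s1 s2 s3 _ _ IHA _ _ _ IHM|G M N x A B s _ IHM _ IHN _ _
                 |G M A B s _ IHM _ _ _]; simpl.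
  - apply incl_nil_l.
  - intros u [<-|[]]. eapply in_dom, Hin.
  - apply incl_app; [exact IHA | apply incl_lminus_fv_body, IHB].
  - apply incl_app; [exact IHA | apply incl_lminus_fv_body, IHM].
  - apply incl_app; assumption.
  - exact IHM.
Qed.

Lemma wf_fv : forall G, wf G -> forall y (A : term), In (y, A) G -> incl (fv A) (dom G).
Proof.
  induction 1 as [|G x A s _ IH HA _]; simpl; intros y B Hin; [destruct Hin|].
  destruct Hin as [E|Hin]; apply incl_tl.
  - injection E as -> ->. eapply fv_typ, HA.
  - eapply IH, Hin.
Qed.

Lemma thinning : forall G (M B : term), typ G M B ->
  forall G', incl G G' -> wf G' -> typ G' M B.
Proof.
  assert (Hext : forall G G' (A : term) z, incl G G' -> ~ In z (dom G') ->
            ~ In z (dom G) /\ incl ((z, A) :: G) ((z, A) :: G')).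
  { intros G G' A z HG Hz. split.
    - intros Hin. apply Hz, (incl_map fst HG), Hin.
    - apply incl_cons; [left; reflexivity | apply incl_tl, HG]. }
  induction 1 as [G s1 s2 _ Hax|G x A _ Hin|G x A B s1 s2 s3 Hr _ IHA _ IHB
                 |G x y A B M s1 s2 s3 Hr _ IHA _ IHB _ IHM|G M N x A B s _ IHM _ IHN _ IHB
                 |G M A B s _ IHM HAB _ IHB];
    intros G' HG HwG'.
  - apply typ_sort; assumption.
  - apply typ_var; auto.
  - eapply typ_prod; eauto.
    intros z Hz. destruct (Hext G G' A z HG Hz). apply IHB; auto. eapply wf_cons; eauto.
  - eapply typ_abs; eauto.
    + intros z Hz. destruct (Hext G G' A z HG Hz). apply IHB; auto. eapply wf_cons; eauto.
    + intros z Hz. destruct (Hext G G' A z HG Hz). apply IHM; auto. eapply wf_cons; eauto.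
  - eapply typ_app; eauto.
  - eapply typ_conv; eauto.
Qed.

(* Typing is not known to be closed under [alpha] on raw syntax, so well-typed
   substitutions and the substitution property are stated up to [alpha]. *)
Definition wt_subst (s : subst V C) (G D : context V C) :=
  wf D /\ forall y (A : term), In (y, A) G ->
    forall M' A', aeq M' (s y) -> aeq A' (act s A) -> typ D M' A'.

Definition subst_stable (G : context V C) (M B : term) :=
  forall s D, wt_subst s G D ->
    forall M' B', aeq M' (act s M) -> aeq B' (act s B) -> typ D M' B'.

Lemma wt_subst_cons s G D z (A A' : term) u s1 :
  wt_subst s G D -> typ G A (tc V s1) -> subst_stable G A (tc V s1) ->
  ~ In z (dom G) -> ~ In u (dom D) -> aeq A' (act s A) ->
  wt_subst (upd s z (tv u)) ((z, A) :: G) ((u, A') :: D).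
Proof.
  intros [HwD Hs] HA IHA Hz Hu EA.
  assert (Hfresh : forall B : term, incl (fv B) (dom G) -> act (upd s z (tv u)) B = act s B)
    by (intros B HB; apply act_upd_notin; intros Hin; apply Hz, HB, Hin).
  assert (HtA : forall A'', aeq A'' (act s A) -> typ D A'' (tc V s1))
    by (intros A'' HA''; exact (IHA s D (conj HwD Hs) A'' _ HA'' eq_refl)).
  assert (HwD' : wf ((u, A') :: D)) by (eapply wf_cons; [exact HwD | apply HtA, EA | exact Hu]).
  split; [exact HwD'|]. intros y B [E|Hin] M' B' HM HB.
  - injection E as <- <-. rewrite upd_eq in HM. apply aeq_tv_inv in HM as ->.
    rewrite Hfresh in HB by (eapply fv_typ, HA).
    apply typ_conv with (A := A') (s := s1).
    + apply typ_var; [exact HwD' | left; reflexivity].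
    + apply aeq_conv, aeq_trans with (act s A); [exact EA | apply aeq_sym, HB].
    + apply thinning with D; [apply HtA, HB | apply incl_tl, incl_refl | exact HwD'].
  - rewrite upd_neq in HM by (intros ->; apply Hz; eapply in_dom, Hin).
    rewrite Hfresh in HB by (eapply wf_fv; [eapply typ_wf, HA | exact Hin]).
    apply thinning with D; [eapply Hs; eauto | apply incl_tl, incl_refl | exact HwD'].
Qed.

Lemma aeq_usubst_body (M M' : term) x x' s z u :
  ~ In z (fv M) ->
  body_aeq x' M' s x M ->
  aeq (usubst M' x' (tv u)) (act (upd s z (tv u)) (usubst M x (tv z))).
Proof.
  intros Hz EM. unfold aeq, usubst. rewrite !act_comp.
  transitivity (act (upd io x' (tv u)) M').
  - apply act_ext. intros w _. unfold scomp, upd. destruct (veq_dec V w x'); reflexivity.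
  - rewrite EM. apply act_ext. intros w Hw. unfold scomp. destruct (veq_dec V w x) as [->|Hwx].
    + rewrite !upd_eq. simpl. rewrite upd_eq. reflexivity.
    + rewrite !upd_neq by exact Hwx. simpl. rewrite upd_neq; [reflexivity|].
      intros ->. exact (Hz Hw).
Qed.

(* The binder premises of (prod) and (abs) are checked at a name [z] fresh for
   everything in sight, which the extended substitution sends to [u]. *)
Lemma subst_stable_body G (A M B : term) x y s1 s D A' M' B' x' y' :
  typ G A (tc V s1) -> subst_stable G A (tc V s1) ->
  (forall z, ~ In z (dom G) ->
     subst_stable ((z, A) :: G) (usubst M x (tv z)) (usubst B y (tv z))) ->
  wt_subst s G D -> aeq A' (act s A) ->
  body_aeq x' M' s x M ->
  body_aeq y' B' s y B ->
  forall u, ~ In u (dom D) ->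
  typ ((u, A') :: D) (usubst M' x' (tv u)) (usubst B' y' (tv u)).
Proof.
  intros HA IHA IHbody Hs EA EM EB u Hu.
  pose proof (X'_notin (dom G ++ fv M ++ fv B)) as Hz.
  set (z := X' V chi' (dom G ++ fv M ++ fv B)) in Hz. rewrite !in_app_iff in Hz.
  apply (IHbody z) with (upd s z (tv u)).
  - tauto.
  - apply wt_subst_cons with s1; auto.
  - apply aeq_usubst_body; [tauto | exact EM].
  - apply aeq_usubst_body; [tauto | exact EB].
Qed.

Lemma subst_stable_prod G (A B : term) x s1 s2 s3 s D A' B' x' :
  Rl s1 s2 s3 -> typ G A (tc V s1) -> subst_stable G A (tc V s1) ->
  (forall z, ~ In z (dom G) -> subst_stable ((z, A) :: G) (usubst B x (tv z)) (tc V s2)) ->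
  wt_subst s G D -> aeq A' (act s A) -> body_aeq x' B' s x B ->
  typ D (tpi x' A' B') (tc V s3).
Proof.
  intros Hr HA IHA IHB Hs EA EB.
  apply typ_prod with (s1 := s1) (s2 := s2); [exact Hr | exact (IHA s D Hs A' _ EA eq_refl)|].
  exact (subst_stable_body G A B (tc V s2) x x s1 s D A' B' (tc V s2) x' x'
           HA IHA IHB Hs EA EB (fun _ => eq_refl)).
Qed.

Lemma typ_subst_stable : forall G (M B : term), typ G M B -> subst_stable G M B.
Proof.
  induction 1 as [G s1 s2 _ Hax|G x A _ Hin|G x A B s1 s2 s3 Hr HA IHA _ IHB
                 |G x y A B M s1 s2 s3 Hr HA IHA _ IHB _ IHM|G M N x A B s _ IHM _ IHN _ IHB
                 |G M A B s _ IHM HAB _ IHB];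
    intros sg D Hs M' B' HM' HB'.
  - apply aeq_tc_inv in HM' as ->. apply aeq_tc_inv in HB' as ->.
    apply typ_sort; [apply Hs | exact Hax].
  - eapply (proj2 Hs); eauto.
  - apply aeq_tc_inv in HB' as ->.
    destruct (aeq_act_tpi_inv _ _ _ _ _ HM') as (x1 & A1 & B1 & -> & HA1 & HB1).
    exact (subst_stable_prod G A B x s1 s2 s3 sg D A1 B1 x1 Hr HA IHA IHB Hs HA1 HB1).
  - destruct (aeq_act_tlam_inv _ _ _ _ _ HM') as (x1 & A1 & M1 & -> & HA1 & HM1).
    destruct (aeq_act_tpi_inv _ _ _ _ _ HB') as (y2 & A2 & B2 & -> & HA2 & HB2).
    apply typ_conv with (A := tpi y2 A1 B2) (s := s3);
      [| | exact (subst_stable_prod G A B y s1 s2 s3 sg D A2 B2 y2 Hr HA IHA IHB Hs HA2 HB2)].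
    + apply typ_abs with (s1 := s1) (s2 := s2) (s3 := s3);
        [exact Hr | eapply IHA; eauto; reflexivity | |].
      * exact (subst_stable_body G A B (tc V s2) y y s1 sg D A1 B2 (tc V s2) y2 y2
                 HA IHA IHB Hs HA1 HB2 (fun _ => eq_refl)).
      * exact (subst_stable_body G A M B x y s1 sg D A1 M1 B2 x1 y2
                 HA IHA IHM Hs HA1 HM1 HB2).
    + apply aeq_conv, aeq_tpi; [|reflexivity].
      apply aeq_trans with (act sg A); [exact HA1 | apply aeq_sym, HA2].
  - destruct (aeq_act_tapp_inv _ _ _ _ HM') as (M1 & N1 & -> & HM1 & HN1).
    set (z := Xs sg (lminus (fv B) x)).
    assert (HB1 : aeq (usubst (act (upd sg x (tv z)) B) z N1) (act sg (usubst B x N)))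
      by (apply aeq_usubst_act; [apply Xs_fresh_for | exact HN1]).
    assert (HtM : typ D M1 (act sg (tpi x A B))) by (eapply IHM; eauto; reflexivity).
    simpl in HtM. fold z in HtM.
    apply typ_conv with (A := usubst (act (upd sg x (tv z)) B) z N1) (s := s).
    + eapply typ_app; [exact HtM | eapply IHN; eauto; reflexivity | eapply IHB; eauto; reflexivity].
    + apply aeq_conv, aeq_trans with (act sg (usubst B x N)); [exact HB1 | apply aeq_sym, HB'].
    + eapply IHB; eauto. reflexivity.
  - apply typ_conv with (A := act sg A) (s := s).
    + eapply IHM; eauto. reflexivity.
    + eapply rst_trans; [apply conv_act, HAB | apply aeq_conv, aeq_sym, HB'].
    + eapply IHB; eauto. reflexivity.
Qed.

Lemma wt_subst_iota : forall G, wf G -> wt_subst io G G.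
Proof.
  induction 1 as [|G x A s HwG IH HA Hx].
  - split; [apply wf_nil | intros y B []].
  - assert (HwG' : wf ((x, A) :: G)) by (eapply wf_cons; eauto).
    split; [exact HwG'|]. intros y B [E|Hin] M' B' HM HB.
    + injection E as <- <-. apply aeq_tv_inv in HM as ->.
      apply typ_conv with (A := A) (s := s).
      * apply typ_var; [exact HwG' | left; reflexivity].
      * apply aeq_conv, aeq_trans with (act io A);
          [apply aeq_sym, aeq_act_iota | apply aeq_sym, HB].
      * apply thinning with G; [| apply incl_tl, incl_refl | exact HwG'].
        exact (typ_subst_stable _ _ _ HA io G IH B' _ HB eq_refl).
    + apply thinning with G; [eapply (proj2 IH); eauto | apply incl_tl, incl_refl | exact HwG'].
Qed.

Lemma typ_aeq G (M B M' B' : term) : typ G M B -> aeq M' M -> aeq B' B -> typ G M' B'.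
Proof.
  intros H HM HB. apply (typ_subst_stable _ _ _ H io G (wt_subst_iota _ (typ_wf _ _ _ H))).
  - apply aeq_trans with M; [exact HM | apply aeq_sym, aeq_act_iota].
  - apply aeq_trans with B; [exact HB | apply aeq_sym, aeq_act_iota].
Qed.

Lemma wt_subst_single G x (A N : term) :
  wf ((x, A) :: G) -> typ G N A -> wt_subst (upd io x N) ((x, A) :: G) G.
Proof.
  intros Hwf HN. inversion Hwf as [|G0 x0 A0 s HwG HA Hx]; subst.
  split; [exact HwG|]. intros y B [E|Hin] M' B' HM HB.
  - injection E as <- <-. rewrite upd_eq in HM.
    rewrite act_upd_notin in HB by (intros Hin; apply Hx, (fv_typ _ _ _ HA), Hin).
    apply (typ_aeq G N A); [exact HN | exact HM |].
    eapply aeq_trans; [exact HB | apply aeq_act_iota].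
  - rewrite upd_neq in HM by (intros ->; apply Hx; eapply in_dom, Hin).
    apply aeq_tv_inv in HM as ->.
    rewrite act_upd_notin in HB by (intros Hin'; apply Hx, (wf_fv _ HwG _ _ Hin), Hin').
    apply (typ_aeq G (tv y) B); [apply typ_var; assumption | reflexivity
                                | eapply aeq_trans; [exact HB | apply aeq_act_iota]].
Qed.

End Typing.
End Substitution.

Theorem mainTheorem17 (V : VarType) (C : Type) (chi' : list nat -> nat)
  (Hchi : forall ns : list nat, ~ In (chi' ns) ns)
  (Ax : C -> C -> Prop) (Rl : C -> C -> C -> Prop)
  (G : context V C) (M N A B : term V C) (x : V) :
  typ chi' Ax Rl ((x, A) :: G) M B ->
  typ chi' Ax Rl G N A ->
  typ chi' Ax Rl G (usubst chi' M x N) (usubst chi' B x N).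
Proof.
  intros HM HN.
  apply (typ_subst_stable V C chi' Hchi Ax Rl _ _ _ HM (upd (iota V C) x N) G).
  - apply wt_subst_single; [exact Hchi | eapply typ_wf, HM | exact HN].
  - reflexivity.
  - reflexivity.
Qed.
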